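(* In the Gödel setting described in the context, let $(A,B,R)$ be a $\top$-normalized fuzzy context and $(g,f)\in\mathcal{F}_N$ such that for every $a\in A$ there exists $b\in B$ with $g(b)>R(a,b)$. Then $f^{\downarrow}(b)\le g^{\uparrow\downarrow}(b)$ for all $b\in B$; consequently, in the fuzzy concept lattice, $\langle f^{\downarrow},f^{\downarrow\uparrow}\rangle\preceq\langle g^{\uparrow\downarrow},g^{\uparrow}\rangle$.
   Context: Gödel setting: all truth-value sets are $[0,1]$ with the usual order, $x\&y=\min\{x,y\}$, and $z\swarrow y=z\nwarrow y$ equals $1$ if $y\le z$ and $z$ otherwise. A fuzzy context is $(A,B,R)$ with nonempty finite sets $A,B$ and $R\colon A\times B\to[0,1]$. For $g\colon B\to[0,1]$, $f\colon A\to[0,1]$: $g^{\uparrow}(a)=\inf_{b\in B}(R(a,b)\swarrow g(b))$, $f^{\downarrow}(b)=\inf_{a\in A}(R(a,b)\nwarrow f(a))$, $g^{\uparrow_N}(a)=\inf_{b\in B}(g(b)\swarrow R(a,b))$, $f^{\downarrow^N}(b)=\inf_{a\in A}(f(a)\nwarrow R(a,b))$, $g^{\uparrow_\pi}(a)=\sup_{b\in B}\min\{R(a,b),g(b)\}$. $\mathcal{F}_N=\{(g,f)\mid g^{\uparrow_N}=f,\ f^{\downarrow^N}=g\}$. A (fuzzy) concept is a pair $\langle g,f\rangle$ with $g^\uparrow=f$, $f^\downarrow=g$, ordered by $\langle g_1,f_1\rangle\preceq\langle g_2,f_2\rangle$ iff $g_1\le g_2$ pointwise. The context is normalized if no row $R(a,\cdot)$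 and no column $R(\cdot,b)$ is identically $0$, and no row and no column has all values different from $0$; it is $\top$-normalized if moreover for every $a\in A$ there is $b_a\in B$ with $R(a,b_a)=1$. *)

(* truth values are the real unit interval of an R : realType. *)
From HB Require Import structures.
From mathcomp Require Import all_boot all_order all_algebra.
From mathcomp Require Import reals.
Set Implicit Arguments. Unset Strict Implicit. Unset Printing Implicit Defensive.
Import Order.TTheory GRing.Theory Num.Theory.
Local Open Scope ring_scope.

Section Goedel.
Variable R : realType.

(* Goedel residuum: z ↙ y = z ↖ y = 1 if y <= z, z otherwise *)
Definition gres (z y : R) : R := if y <= z then 1 else z.

Definition unit_val (x : R) : Prop := 0 <= x /\ x <= 1.

Variables (A B : finType) (Rel : A -> B -> R).

(* infima over finite nonempty index sets of values in [0,1]: min with top 1 *)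
Definition up (g : B -> R) (a : A) : R :=
  \big[Order.min/1]_(b : B) gres (Rel a b) (g b).
Definition down (f : A -> R) (b : B) : R :=
  \big[Order.min/1]_(a : A) gres (Rel a b) (f a).
Definition upN (g : B -> R) (a : A) : R :=
  \big[Order.min/1]_(b : B) gres (g b) (Rel a b).
Definition downN (f : A -> R) (b : B) : R :=
  \big[Order.min/1]_(a : A) gres (f a) (Rel a b).

Definition in_FN (g : B -> R) (f : A -> R) : Prop :=
  (forall a, upN g a = f a) /\ (forall b, downN f b = g b).

Definition is_concept (g : B -> R) (f : A -> R) : Prop :=
  (forall a, up g a = f a) /\ (forall b, down f b = g b).

Definition concept_le (g1 : B -> R) (f1 : A -> R) (g2 : B -> R) (f2 : A -> R) : Prop :=
  forall b, g1 b <= g2 b.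

Definition fuzzy_context : Prop :=
  (0 < #|A|)%N /\ (0 < #|B|)%N /\ forall a b, unit_val (Rel a b).

Definition normalized : Prop :=
  (forall a, exists b, Rel a b != 0) /\
  (forall b, exists a, Rel a b != 0) /\
  (forall a, exists b, Rel a b = 0) /\
  (forall b, exists a, Rel a b = 0).

Definition top_normalized : Prop :=
  normalized /\ forall a, exists b, Rel a b = 1.

End Goedel.

(* The inequality f^↓ <= g^↑↓ is checked pointwise on the infimum defining f^↓(b):
   for each a, either R(a,b) >= g^↑(a), making the corresponding term of g^↑↓(b)
   equal to 1, or R(a,b) < g^↑(a). In the latter case R(a,b) < f(a): otherwise,
   choosing b0 with R(a,b0) < g(b0) gives g^↑(a) <= R(a,b0), hence
   f(a) < R(a,b0), and then g(b0) = f^↓N(b0) <= f(a) < R(a,b0) < g(b0).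
   So the term R(a,b) ↙ f(a) of f^↓(b) is R(a,b), which is the term R(a,b) ↙ g^↑(a).
   The concept part is the usual closure property f^↓↑↓ = f^↓ of the Galois connection. *)
From mathcomp Require Import all_boot all_order all_algebra.
From mathcomp Require Import reals.
Import Order.TTheory GRing.Theory Num.Theory.
Local Open Scope ring_scope.

Section GoedelResiduum.
Context {R : realType}.
Implicit Types x y z : R.

Lemma le_gres x y z : x <= 1 -> (x <= gres z y) = (Order.min x y <= z).
Proof.
rewrite /gres => x_le1; case: (leP y z) => [y_le_z | z_lt_y].
  by rewrite x_le1 ge_min y_le_z orbT.
by rewrite ge_min (leNgt y) z_lt_y orbF.
Qed.

Lemma le_gresC x y z : x <= 1 -> y <= 1 -> (x <= gres z y) = (y <= gres z x).
Proof. by move=> x_le1 y_le1; rewrite !le_gres // minC. Qed.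

Lemma gres_antitone z y1 y2 : z <= 1 -> y1 <= y2 -> gres z y2 <= gres z y1.
Proof.
rewrite /gres => z_le1 y12; case: ifP => y2z; case: ifP => y1z //.
by rewrite (le_trans y12 y2z) in y1z.
Qed.

Lemma gresE_lt {z y : R} : z < y -> gres z y = z.
Proof. by rewrite /gres leNgt => ->. Qed.

End GoedelResiduum.

Section GaloisConnection.
Variables (R : realType) (A B : finType) (Rel : A -> B -> R).

Lemma up_le1 (g : B -> R) a : up Rel g a <= 1.
Proof. exact: bigmin_le_id. Qed.

Lemma down_le1 (f : A -> R) b : down Rel f b <= 1.
Proof. exact: bigmin_le_id. Qed.

Lemma le_up_down (f : A -> R) a : f a <= 1 -> f a <= up Rel (down Rel f) a.
Proof.
move=> fa_le1; apply: le_bigmin => // b _.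
rewrite le_gresC ?down_le1 //.
exact: (bigmin_le _ a (fun a => gres (Rel a b) (f a))).
Qed.

Lemma le_down_up (g : B -> R) b : g b <= 1 -> g b <= down Rel (up Rel g) b.
Proof.
move=> gb_le1; apply: le_bigmin => // a _.
rewrite le_gresC ?up_le1 //.
exact: (bigmin_le _ b (fun b => gres (Rel a b) (g b))).
Qed.

Hypothesis Rel_le1 : forall a b, Rel a b <= 1.

Lemma up_antitone (g1 g2 : B -> R) a :
  (forall b, g1 b <= g2 b) -> up Rel g2 a <= up Rel g1 a.
Proof. by move=> g12; apply: le_bigmin2 => b _; exact: gres_antitone. Qed.

Lemma down_antitone (f1 f2 : A -> R) b :
  (forall a, f1 a <= f2 a) -> down Rel f2 b <= down Rel f1 b.
Proof. by move=> f12; apply: le_bigmin2 => a _; exact: gres_antitone. Qed.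

Lemma down_up_down (f : A -> R) b :
  (forall a, f a <= 1) -> down Rel (up Rel (down Rel f)) b = down Rel f b.
Proof.
move=> f_le1; apply/le_anti/andP; split.
  by apply: down_antitone => a; exact: le_up_down.
exact/le_down_up/down_le1.
Qed.

Lemma up_down_up (g : B -> R) a :
  (forall b, g b <= 1) -> up Rel (down Rel (up Rel g)) a = up Rel g a.
Proof.
move=> g_le1; apply/le_anti/andP; split.
  by apply: up_antitone => b; exact: le_down_up.
exact/le_up_down/up_le1.
Qed.

Lemma is_concept_down (f : A -> R) :
  (forall a, f a <= 1) -> is_concept Rel (down Rel f) (up Rel (down Rel f)).
Proof. by move=> f_le1; split=> // b; exact: down_up_down. Qed.

Lemma is_concept_up (g : B -> R) :
  (forall b, g b <= 1) -> is_concept Rel (down Rel (up Rel g)) (up Rel g).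
Proof. by move=> g_le1; split=> // a; exact: up_down_up. Qed.

End GaloisConnection.

Section ExtentInequality.
Variables (R : realType) (A B : finType) (Rel : A -> B -> R).
Variables (g : B -> R) (f : A -> R).

Lemma up_le_rel {a b} : Rel a b < g b -> up Rel g a <= Rel a b.
Proof.
move=> lt_Rg; rewrite -(gresE_lt lt_Rg).
exact: (bigmin_le _ b (fun b => gres (Rel a b) (g b))).
Qed.

Lemma downN_le a b : f a < Rel a b -> downN Rel f b <= f a.
Proof.
move=> lt_fR; rewrite -(gresE_lt lt_fR).
exact: (bigmin_le _ a (fun a => gres (f a) (Rel a b))).
Qed.

Hypothesis downN_f : forall b, downN Rel f b = g b.

Lemma lt_f_of_lt_up {a b} :
  (exists b0, Rel a b0 < g b0) -> Rel a b < up Rel g a -> Rel a b < f a.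
Proof.
move=> [b0 lt_Rg0] lt_R_up; rewrite ltNge; apply/negP => f_le_R.
have lt_f_R0 : f a < Rel a b0.
  exact: le_lt_trans f_le_R (lt_le_trans lt_R_up (up_le_rel lt_Rg0)).
have g0_le_f : g b0 <= f a by rewrite -downN_f; exact: downN_le.
by have := lt_trans (le_lt_trans g0_le_f lt_f_R0) lt_Rg0; rewrite ltxx.
Qed.

Lemma down_le_down_up :
  (forall a, exists b, Rel a b < g b) ->
  forall b, down Rel f b <= down Rel (up Rel g) b.
Proof.
move=> gt_rel b; apply: le_bigmin => [|a _]; first exact: down_le1.
rewrite /gres; case: (leP (up Rel g a) (Rel a b)) => [_ | lt_R_up]; first exact: down_le1.
rewrite -(gresE_lt (lt_f_of_lt_up (gt_rel a) lt_R_up)).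
exact: (bigmin_le _ a (fun a => gres (Rel a b) (f a))).
Qed.

End ExtentInequality.

Theorem mainTheorem15 (R : realType) (A B : finType) (Rel : A -> B -> R)
  (g : B -> R) (f : A -> R) :
  fuzzy_context Rel -> top_normalized Rel ->
  (forall b, unit_val (g b)) -> (forall a, unit_val (f a)) ->
  in_FN Rel g f ->
  (forall a, exists b, g b > Rel a b) ->
  (forall b, down Rel f b <= down Rel (up Rel g) b) /\
  (is_concept Rel (down Rel f) (up Rel (down Rel f)) /\
   is_concept Rel (down Rel (up Rel g)) (up Rel g) /\
   concept_le (down Rel f) (up Rel (down Rel f)) (down Rel (up Rel g)) (up Rel g)).
Proof.
move=> [_ [_ Rel_unit]] _ g_unit f_unit [_ downN_f] gt_rel.
have Rel_le1 a b : Rel a b <= 1 by case: (Rel_unit a b).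
have f_le1 a : f a <= 1 by case: (f_unit a).
have g_le1 b : g b <= 1 by case: (g_unit b).
have extent_le : forall b, down Rel f b <= down Rel (up Rel g) b.
  exact: down_le_down_up.
split=> //; split; first exact: is_concept_down.
by split; first exact: is_concept_up.
Qed.
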